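(* For every $f\in L^{\infty}(\mathbb{R}_+)$, $\overline{M}_1(f)\le\overline{R}(f)$.
   Context: $L^{\infty}(\mathbb{R}_+)$: real-valued essentially bounded measurable functions on $[0,\infty)$. $\overline{M}_1(f)=\lim_{\theta\to\infty}\limsup_{x\to\infty}\frac1\theta\int_x^{x+\theta}f(t)\,dt$ and $\overline{R}(f)=\limsup_{x\to\infty}e^{-x}\int_0^xf(t)e^t\,dt$. *)

From HB Require Import structures.
From mathcomp Require Import all_boot all_order all_algebra.
From mathcomp Require Import all_classical all_reals all_analysis.
Set Implicit Arguments. Unset Strict Implicit. Unset Printing Implicit Defensive.
Import Order.TTheory GRing.Theory Num.Theory.
Import numFieldNormedType.Exports.
Local Open Scope classical_set_scope.
Local Open Scope ring_scope.
Local Open Scope ereal_scope.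

Definition Linfty_Rplus (R : realType) (f : R -> R) : Prop :=
  measurable_fun (`[0%R, +oo[%classic : set R) f /\
  exists M : R, {ae (@lebesgue_measure R), forall t : R,
     `[0%R, +oo[%classic t -> (`|f t| <= M)%R}.

Definition limsup_pinfty (R : realType) (g : R -> \bar R) : \bar R :=
  ereal_inf [set ereal_sup [set g x | x in `[a, +oo[%classic] | a in [set: R]].

Definition window_mean (R : realType) (f : R -> R) (theta x : R) : \bar R :=
  (theta^-1)%:E * \int[@lebesgue_measure R]_(t in `[x, (x + theta)%R]%classic) (f t)%:E.

Definition M1_upper (R : realType) (f : R -> R) : \bar R :=
  lim ((fun theta : R => limsup_pinfty (window_mean f theta)) @ +oo%R).

Definition R_upper (R : realType) (f : R -> R) : \bar R :=
  limsup_pinfty (fun x : R =>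
    (expR (- x))%:E *
      \int[@lebesgue_measure R]_(t in `[0%R, x]%classic) (f t * expR t)%:E).

From mathcomp Require Import all_boot all_order all_algebra.
From mathcomp Require Import all_classical all_reals all_analysis.
From mathcomp Require Import measurable_realfun ring lra.
Set Implicit Arguments. Unset Strict Implicit. Unset Printing Implicit Defensive.
Import Order.TTheory GRing.Theory Num.Theory.
Import numFieldNormedType.Exports.
Local Open Scope classical_set_scope.
Local Open Scope ring_scope.

(* Let F be a primitive of f, |f| <= M, and g(x) = e^-x \int_0^x f(t) e^t dt,
   so that R(f) = limsup g and |g| <= M.  For a step [y, y + d],
     F(y + d) - F(y) = g(y + d) - e^-d g(y)
                       + e^-(y+d) \int_y^(y+d) f(t) (e^(y+d) - e^t) dt,
   where the integral term is O(M d^2); hence, as long as g <= s on [y, oo),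
   F - g increases by at most d s + 2 M d^2.  Summing n steps of length
   theta / n and letting n -> oo bounds the mean of f over [x, x + theta] by
   sup_{t >= x} g(t) + 2M / theta, so the limsup H(theta) of these means is
   at most R(f) + 2M / theta.  Covering a long window by short ones gives
   H(theta) <= H(s) + 2Ms / theta, so H converges to its infimum, which is
   M_1(f) and is therefore at most R(f). *)

Section ae_bounded_mul.
Context d (T : measurableType d) (R : realType).
Variable mu : {measure set T -> \bar R}.
Variables (D : set T) (f w : T -> R) (M : R).
Hypotheses (mD : measurable D) (M0 : 0 <= M) (mf : measurable_fun D f).
Hypothesis fM : {ae mu, forall t, D t -> `|f t| <= M}.
Hypothesis iw : mu.-integrable D (EFin \o w).

Let mw : measurable_fun D w.
Proof. exact/measurable_EFinP/(measurable_int mu). Qed.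

Let iMw : mu.-integrable D (EFin \o (fun t => M * `|w t|)).
Proof.
by apply: eq_integrable (integrableZl mD M (integrable_norm iw)).
Qed.

Let integral_normrM_le :
  (\int[mu]_(t in D) `|f t * w t|%:E <= \int[mu]_(t in D) (M * `|w t|)%:E)%E.
Proof.
apply: ae_ge0_le_integral => //.
- by do 2 apply: measurableT_comp => //; exact: measurable_funM.
- by move=> t _; rewrite lee_fin mulr_ge0.
- by case/integrableP: iMw.
apply: filterS fM => t fMt Dt.
by rewrite lee_fin normrM ler_wpM2r // fMt.
Qed.

Lemma integrable_mulr_ae_bounded : mu.-integrable D (EFin \o (f \* w)).
Proof.
apply/integrableP; split; first exact/measurable_EFinP/measurable_funM.
apply: le_lt_trans integral_normrM_le _.
rewrite -ge0_fin_numE ?integrable_fin_num //.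
by apply: integral_ge0 => t _; rewrite lee_fin mulr_ge0.
Qed.

Lemma le_normr_Rintegral_ae_bounded :
  `|\int[mu]_(t in D) (f t * w t)| <= M * \int[mu]_(t in D) `|w t|.
Proof.
apply: le_trans (le_normr_Rintegral mD integrable_mulr_ae_bounded) _.
rewrite -RintegralZl //; last exact: integrable_norm.
apply: fine_le integral_normrM_le; apply: integrable_fin_num => //.
exact: integrable_norm integrable_mulr_ae_bounded.
Qed.
End ae_bounded_mul.

Section lebesgue_itv.
Variable R : realType.
Notation mu := (@lebesgue_measure R).
Implicit Types (a b c : R) (w : R -> R).

Lemma lebesgue_measure_itv_cc a b : a <= b -> mu `[a, b] = (b - a)%:E.
Proof.
move=> ab; rewrite lebesgue_measure_itv /= lte_fin.
by case: ltgtP ab => //; last by move=> -> _; rewrite subrr.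
Qed.

(* [filterS] does not find the filter instance of [almost_everywhere] for the
   Lebesgue measure by itself. *)
Lemma lebesgue_aeS (P Q : R -> Prop) : (forall t, P t -> Q t) ->
  {ae mu, forall t, P t} -> {ae mu, forall t, Q t}.
Proof.
exact: (filterS (F := almost_everywhere mu)
  (Filter := ae_filter_ringOfSetsType mu)).
Qed.

Lemma continuous_integrable_itv w a b : continuous w ->
  mu.-integrable `[a, b] (EFin \o w).
Proof.
move=> cw; apply: continuous_compact_integrable; first exact: segment_compact.
exact: continuous_subspaceT.
Qed.

Lemma EFin_Rintegral D w : measurable D -> mu.-integrable D (EFin \o w) ->
  (\int[mu]_(t in D) (w t)%:E)%E = (\int[mu]_(t in D) w t)%:E.
Proof. by move=> mD iw; rewrite fineK // integrable_fin_num. Qed.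

Lemma Rintegral_itv_split w a b c : a <= b -> b <= c ->
  mu.-integrable `[a, c] (EFin \o w) ->
  \int[mu]_(t in `[a, c]) w t =
  \int[mu]_(t in `[a, b]) w t + \int[mu]_(t in `[b, c]) w t.
Proof.
move=> ab bc iw.
have := @Rintegral_itvB R w (BLeft a) (BRight c) b iw.
rewrite !bnd_simp => /(_ ab bc) split_ac.
rewrite -(@Rintegral_itv_obnd_cbnd _ b (BRight c)) -?split_ac 1?addrC ?subrK //.
by apply: integrableS iw => //; apply: subset_itvr; rewrite bnd_simp.
Qed.

Lemma Rintegral_itv_cst k a b : a <= b ->
  \int[mu]_(t in `[a, b]) k = k * (b - a).
Proof.
move=> ab; rewrite Rintegral_cst //.
by rewrite (congr1 fine (lebesgue_measure_itv_cc ab)).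
Qed.

Lemma Rintegral_expR a b : a <= b ->
  \int[mu]_(t in `[a, b]) expR t = expR b - expR a.
Proof.
rewrite le_eqVlt => /predU1P[<-|ab].
  by rewrite set_itv1 Rintegral_set1 subrr.
rewrite /Rintegral (@continuous_FTC2 _ _ expR _ _ ab) //.
- exact/continuous_subspaceT/continuous_expR.
- split.
  + by move=> t _; exact: derivable_expR.
  + exact/cvg_at_right_filter/continuous_expR.
  + exact/cvg_at_left_filter/continuous_expR.
- by move=> t _; rewrite derive1E (congr1 (fun h => h t) (derive_expR R)).
Qed.
End lebesgue_itv.

Section real_lemmas.
Variable R : realType.
Implicit Types (h : R -> R) (x d c : R).

Lemma increment_mulrn_le h x d c : 0 <= d ->
  (forall y, x <= y -> h (y + d) - h y <= d * c) ->
  forall k : nat, h (x + k%:R * d) - h x <= k%:R * d * c.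
Proof.
move=> d0 step; elim=> [|k IH]; first by rewrite !mul0r addr0 subrr.
have xy : x <= x + k%:R * d by rewrite lerDl mulr_ge0.
rewrite -natr1 !mulrDl !mul1r addrA.
by have := step _ xy; lra.
Qed.

(* Cover [x, x + th] by windows of length s; the leftover piece, shorter than
   s, costs at most 2 M s because [- M <= sg]. *)
Lemma increment_le_of_step h M x s sg th :
  0 <= M -> 0 < s -> 0 <= th -> - M <= sg ->
  (forall a b, x <= a -> a <= b -> h b - h a <= M * (b - a)) ->
  (forall y, x <= y -> h (y + s) - h y <= s * sg) ->
  h (x + th) - h x <= th * sg + 2 * M * s.
Proof.
move=> M0 s0 th0 sgM lip step.
have /andP[n_le n_gt] := truncn_itv (divr_ge0 th0 (ltW s0)).
set n := Num.trunc (th / s) in n_le n_gt.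
rewrite ler_pdivlMr // in n_le; rewrite ltr_pdivrMr // -natr1 in n_gt.
have xy : x <= x + n%:R * s by rewrite lerDl mulr_ge0 // ltW.
have xy' : x + n%:R * s <= x + th by rewrite lerD2l.
have tail : h (x + th) - h (x + n%:R * s) <= M * (th - n%:R * s).
  by rewrite (_ : th - _ = x + th - (x + n%:R * s)); [exact: lip | ring].
have := increment_mulrn_le (ltW s0) step n.
have : 0 <= (th - n%:R * s) * (sg + M) by apply: mulr_ge0; lra.
have : 0 <= M * (s - (th - n%:R * s)) by apply: mulr_ge0; lra.
nra.
Qed.

Lemma le_of_le_addr_divn x y c :
  (forall n : nat, x <= y + c / n.+1%:R) -> x <= y.
Proof.
move=> H; apply/ler_addgt0Pr => e e0.
have [c0|c0] := lerP c 0.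
  apply: le_trans (H 0%N) _.
  by rewrite lerD2l (le_trans _ (ltW e0)) // mulr_le0_ge0.
set n := Num.trunc (c / e).
apply: le_trans (H n) _; rewrite lerD2l ler_pdivrMr // mulrC -ler_pdivrMr //.
exact: ltW (truncnS_gt _).
Qed.

Lemma expRN_le d : 0 <= d -> 1 - d <= expR (- d) <= 1 - d + d ^+ 2.
Proof.
move=> d0; have e1 := expR_ge1Dx (- d); have e2 := expR_ge1Dx d.
have inv : expR (- d) * expR d = 1 by rewrite -expRD addNr expR0.
have ep := expR_gt0 (- d).
apply/andP; split; first lra.
have : 1 <= expR d * (1 - d + d ^+ 2) by nra.
nra.
Qed.

Lemma cvgy_inf h lo C : (forall th, 0 < th -> lo <= h th) ->
  (forall s th, 0 < s -> 0 < th -> h th <= h s + C * s / th) ->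
  h x @[x --> +oo] --> inf [set h s | s in `]0, +oo[].
Proof.
move=> hlo hC; set E := [set h s | s in _].
have E0 : E !=set0 by exists (h 1), 1 => //=; rewrite in_itv /= ltr01.
have Elb : has_lbound E.
  by exists lo => _ [s /= s0 <-]; apply: hlo; rewrite in_itv /= andbT in s0.
apply/cvgrPdist_lt => e e0.
have e20 : 0 < e / 2 by rewrite divr_gt0.
have [_ [s /= s0 <-] hs] := inf_adherent e20 (conj E0 Elb).
rewrite in_itv /= andbT in s0.
near=> th.
have th0 : 0 < th by near: th; apply: nbhs_pinfty_gt; exact: num_real.
have thC : 2 * C * s / e < th.
  by near: th; apply: nbhs_pinfty_gt; exact: num_real.
have inf_le : inf E <= h th.
  by apply: ge_inf => //; exists th => //=; rewrite in_itv /= th0.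
have h_le := hC _ _ s0 th0.
have tail_small : C * s / th < e / 2.
  by move: thC; rewrite !ltr_pdivrMr //; lra.
by rewrite distrC ger0_norm ?subr_ge0 //; lra.
Unshelve. all: by end_near.
Qed.
End real_lemmas.

Section limsup_pinfty.
Variable R : realType.
Implicit Types (h : R -> \bar R) (a x : R).
Local Open Scope ereal_scope.

Definition sup_from h x := ereal_sup [set h t | t in `[x, +oo[].

Lemma sup_from_ub h x t : (x <= t)%R -> h t <= sup_from h x.
Proof.
by move=> xt; apply: ereal_sup_ubound; exists t; rewrite //= in_itv /= xt.
Qed.

Lemma le_sup_from h x y : (x <= y)%R -> sup_from h y <= sup_from h x.
Proof.
move=> xy; apply: ge_ereal_sup => _ [t /= yt <-]; apply: sup_from_ub.
by rewrite in_itv /= andbT in yt; exact: le_trans yt.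
Qed.

Lemma sup_from_fin_num h x (lo hi : R) :
  (forall t, (x <= t)%R -> lo%:E <= h t <= hi%:E) -> sup_from h x \is a fin_num.
Proof.
move=> hb; have /andP[lox _] := hb _ (lexx x).
rewrite fin_numElt (lt_le_trans (ltNyr lo)) ?(le_trans lox) ?sup_from_ub //=.
apply: (le_lt_trans _ (ltry hi)); apply: ge_ereal_sup => _ [t /= xt <-].
by rewrite in_itv /= andbT in xt; case/andP: (hb _ xt).
Qed.

Lemma limsup_pinfty_le h h' a (c : R) :
  (forall x, (a <= x)%R -> h x <= sup_from h' x + c%:E) ->
  limsup_pinfty h <= limsup_pinfty h' + c%:E.
Proof.
move=> hh'; rewrite -leeBlDr //; apply: le_ereal_inf_tmp => _ [b _ <-].
pose b' := Num.max a b.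
have ab' : (a <= b')%R by rewrite le_max lexx.
have bb' : (b <= b')%R by rewrite le_max lexx orbT.
rewrite leeBlDr // (@le_trans _ _ (sup_from h b')) //.
  by apply: ereal_inf_lbound; exists b'.
apply: ge_ereal_sup => _ [x /= xb' <-]; rewrite in_itv /= andbT in xb'.
apply: le_trans (hh' _ (le_trans ab' xb')) _.
by rewrite leeD2r // (le_sup_from _ (le_trans bb' xb')).
Qed.

Lemma limsup_pinfty_bounded h a (lo hi : R) :
  (forall x, (a <= x)%R -> lo%:E <= h x <= hi%:E) ->
  lo%:E <= limsup_pinfty h <= hi%:E.
Proof.
move=> hb; apply/andP; split.
  apply: le_ereal_inf_tmp => _ [b _ <-].
  have ab' : (a <= Num.max a b)%R by rewrite le_max lexx.
  have /andP[+ _] := hb _ ab'; move/le_trans; apply.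
  by apply: sup_from_ub; rewrite le_max lexx orbT.
apply: ge_ereal_inf; exists (sup_from h a); first by exists a.
apply: ge_ereal_sup => _ [x /= ax <-]; rewrite in_itv /= andbT in ax.
by case/andP: (hb _ ax).
Qed.
End limsup_pinfty.

Section bounded_function.
Variables (R : realType) (f : R -> R) (M : R).
Hypotheses (M0 : 0 <= M) (mf : measurable_fun (`[0%R, +oo[%classic : set R) f).
Notation mu := (@lebesgue_measure R).
Hypothesis fM : {ae mu, forall t, `[0%R, +oo[%classic t -> `|f t| <= M}.
Implicit Types (a b x y d s th : R) (w : R -> R).

Let f_ae_bounded_itv a b : 0 <= a ->
  {ae mu, forall t, `[a, b]%classic t -> `|f t| <= M}.
Proof.
move=> a0; apply: lebesgue_aeS fM => t fMt /=; rewrite in_itv /= => /andP[ta _].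
by apply: fMt; rewrite /= in_itv /= andbT (le_trans a0).
Qed.

Let measurable_f_itv a b : 0 <= a -> measurable_fun `[a, b] f.
Proof.
move=> a0; apply: measurable_funS mf => // t /=.
rewrite !in_itv /= => /andP[ta _].
by rewrite andbT (le_trans a0).
Qed.

Lemma integrable_fmul w a b : 0 <= a -> continuous w ->
  mu.-integrable `[a, b] (EFin \o (f \* w)).
Proof.
move=> a0 cw; apply: integrable_mulr_ae_bounded M0 _ _ _ => //.
- exact: measurable_f_itv.
- exact: f_ae_bounded_itv.
- exact: continuous_integrable_itv.
Qed.

Lemma le_normr_Rintegral_fmul w a b : 0 <= a -> continuous w ->
  `|\int[mu]_(t in `[a, b]) (f t * w t)| <= M * \int[mu]_(t in `[a, b]) `|w t|.
Proof.
move=> a0 cw; apply: le_normr_Rintegral_ae_bounded M0 _ _ _ => //.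
- exact: measurable_f_itv.
- exact: f_ae_bounded_itv.
- exact: continuous_integrable_itv.
Qed.

Let continuous_cst (k : R) : continuous (fun _ : R => k).
Proof. exact: cst_continuous. Qed.

Definition wprim w x := \int[mu]_(t in `[0, x]) (f t * w t).
Definition prim := wprim (fun=> 1).
Definition expmean x := expR (- x) * wprim expR x.

Lemma wprimB w a b : 0 <= a -> a <= b -> continuous w ->
  wprim w b - wprim w a = \int[mu]_(t in `[a, b]) (f t * w t).
Proof.
move=> a0 ab cw; rewrite /wprim (Rintegral_itv_split a0 ab).
  by rewrite addrC addKr.
exact: integrable_fmul.
Qed.

Lemma normr_primB_le a b : 0 <= a -> a <= b ->
  `|prim b - prim a| <= M * (b - a).
Proof.
move=> a0 ab; rewrite wprimB //.
apply: le_trans (le_normr_Rintegral_fmul b a0 (@continuous_cst 1)) _.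
rewrite (eq_Rintegral _ (g := fun=> 1)) => [|t _]; last by rewrite normr1.
by rewrite Rintegral_itv_cst // mul1r.
Qed.

Lemma normr_expmean_le x : 0 <= x -> `|expmean x| <= M.
Proof.
move=> x0; rewrite /expmean normrM ger0_norm ?expR_ge0 //.
have int_expR : \int[mu]_(t in `[0, x]) `|expR t| = expR x - 1.
  rewrite -expR0 -Rintegral_expR //; apply: eq_Rintegral => t _.
  exact: ger0_norm (expR_ge0 t).
have := le_normr_Rintegral_fmul x (lexx 0) (@continuous_expR R).
rewrite int_expR => /(ler_wpM2l (expR_ge0 (- x))) /le_trans; apply.
by rewrite mulrCA mulrBr -expRD addNr expR0 mulr1 ler_piMr //.
Qed.

Lemma primB_expmean y d : 0 <= y -> 0 <= d ->
  prim (y + d) - prim y = expmean (y + d) - expR (- d) * expmean y +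
    expR (- (y + d)) *
      \int[mu]_(t in `[y, y + d]) (f t * (expR (y + d) - expR t)).
Proof.
move=> y0 d0; set c := y + d; have yc : y <= c by rewrite lerDl.
have cw : continuous (fun t => expR c - expR t).
  by move=> t; apply: cvgB; [exact: continuous_cst | exact: continuous_expR].
have -> : \int[mu]_(t in `[y, c]) (f t * (expR c - expR t)) =
    expR c * (prim c - prim y) - (wprim expR c - wprim expR y).
  rewrite /prim !wprimB //; last exact: continuous_expR.
  transitivity (\int[mu]_(t in `[y, c]) (expR c * (f t * 1) - f t * expR t)).
    by apply: eq_Rintegral => t _; rewrite mulr1 mulrBr mulrC.
  rewrite RintegralB ?RintegralZl //.
  - exact: integrable_fmul.
  - have i1 := integrable_fmul c y0 (@continuous_cst 1).
    by apply: eq_integrable (integrableZl _ (expR c) i1).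
  - exact: integrable_fmul (@continuous_expR R).
rewrite /expmean /c !expRN expRD.
by field; rewrite !gt_eqF ?expR_gt0.
Qed.

Lemma expmean_error_le y d : 0 <= y -> 0 <= d ->
  expR (- (y + d)) *
    `|\int[mu]_(t in `[y, y + d]) (f t * (expR (y + d) - expR t))|
  <= M * (d - 1 + expR (- d)).
Proof.
move=> y0 d0; set c := y + d; have yc : y <= c by rewrite lerDl.
have cw : continuous (fun t => expR c - expR t).
  by move=> t; apply: cvgB; [exact: continuous_cst | exact: continuous_expR].
have int_w : \int[mu]_(t in `[y, c]) `|expR c - expR t| =
    expR c * d - (expR c - expR y).
  transitivity (\int[mu]_(t in `[y, c]) (expR c - expR t)).
    apply: eq_Rintegral => t; rewrite inE /= in_itv /= => /andP[_ tc].
    by rewrite ger0_norm // subr_ge0 ler_expR.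
  rewrite RintegralB ?Rintegral_itv_cst ?Rintegral_expR //.
    by rewrite /c addrAC subrr add0r.
  - exact: continuous_integrable_itv (@continuous_cst _).
  - exact: continuous_integrable_itv (@continuous_expR R).
have := ler_wpM2l (expR_ge0 (- c)) (le_normr_Rintegral_fmul c y0 cw).
rewrite int_w => /le_trans; apply.
rewrite /c !expRN expRD mulrCA ler_wpM2l //.
rewrite le_eqVlt; apply/predU1P; left.
by field; rewrite !gt_eqF ?expR_gt0.
Qed.

Lemma prim_expmean_step y d s : 0 <= y -> 0 <= d -> expmean y <= s ->
  (prim (y + d) - expmean (y + d)) - (prim y - expmean y) <=
  d * (s + 2 * M * d).
Proof.
move=> y0 d0 ys; have := primB_expmean y0 d0.
have := expmean_error_le y0 d0.
move/(le_trans (ler_wpM2l (expR_ge0 _) (ler_norm _))) => err.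
have /andP[u_lo u_hi] := expRN_le d0.
have /ler_normlP[G_lo G_hi] := normr_expmean_le y0.
have k1 : 0 <= d * (s - expmean y) by rewrite mulr_ge0 // subr_ge0.
have k2 : 0 <= (expR (- d) - 1 + d) * (M + expmean y) by apply: mulr_ge0; lra.
have k3 : 0 <= M * (d ^+ 2 - (expR (- d) - 1 + d)) by apply: mulr_ge0; lra.
lra.
Qed.

Lemma primB_le_sup_expmean x th s : 0 <= x -> 0 <= th ->
  (forall t, x <= t -> expmean t <= s) ->
  prim (x + th) - prim x <= th * s + 2 * M.
Proof.
move=> x0 th0 hs; apply: (@le_of_le_addr_divn _ _ _ (2 * M * th ^+ 2)) => n.
pose d := th / n.+1%:R.
have d0 : 0 <= d by rewrite divr_ge0.
have nd : n.+1%:R * d = th by rewrite /d mulrCA mulfV ?mulr1 // pnatr_eq0.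
have step y : x <= y -> (prim (y + d) - expmean (y + d)) - (prim y - expmean y)
    <= d * (s + 2 * M * d).
  by move=> xy; apply: prim_expmean_step; [exact: le_trans xy | | exact: hs].
have := increment_mulrn_le (h := fun t => prim t - expmean t) d0 step n.+1.
rewrite nd /=.
have /ler_normlP[_ E_hi] := normr_expmean_le (addr_ge0 x0 th0).
have /ler_normlP[E_lo _] := normr_expmean_le x0.
have -> : 2 * M * th ^+ 2 / n.+1%:R = th * (2 * M * d) by rewrite /d; ring.
lra.
Qed.

Let integrable_f_itv a b : 0 <= a -> mu.-integrable `[a, b] (EFin \o f).
Proof.
move=> a0; have := integrable_fmul b a0 (@continuous_cst 1).
by apply: eq_integrable => // t _; rewrite /= mulr1.
Qed.

Lemma window_meanE x th : 0 <= x -> 0 < th ->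
  window_mean f th x = ((prim (x + th) - prim x) / th)%:E.
Proof.
move=> x0 th0; have xth : x <= x + th by rewrite lerDl ltW.
rewrite /window_mean /prim wprimB //.
rewrite EFin_Rintegral ?integrable_f_itv // -EFinM mulrC.
by congr (_ * _)%:E; apply: eq_Rintegral => t _; rewrite mulr1.
Qed.

Lemma R_upper_integrandE x : 0 <= x ->
  ((expR (- x))%:E * \int[mu]_(t in `[0%R, x]) (f t * expR t)%:E)%E =
  (expmean x)%:E.
Proof.
move=> x0; rewrite EFin_Rintegral ?integrable_fmul //.
exact: continuous_expR.
Qed.

Lemma window_mean_bounded x th : 0 <= x -> 0 < th ->
  ((- M)%:E <= window_mean f th x <= M%:E)%E.
Proof.
move=> x0 th0; rewrite window_meanE // !lee_fin -ler_norml normrM normfV.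
rewrite (gtr0_norm th0) ler_pdivrMr //.
apply: le_trans (normr_primB_le x0 _) _; first by rewrite lerDl ltW.
by rewrite addrC addKr.
Qed.

Local Open Scope ereal_scope.

Lemma limsup_window_mean_bounded th : (0 < th)%R ->
  (- M)%:E <= limsup_pinfty (window_mean f th) <= M%:E.
Proof.
move=> th0; apply: (@limsup_pinfty_bounded _ _ 0) => x x0.
exact: window_mean_bounded.
Qed.

Lemma limsup_window_mean_le_R_upper th : (0 < th)%R ->
  limsup_pinfty (window_mean f th) <= R_upper f + (2 * M / th)%:E.
Proof.
move=> th0; apply: (@limsup_pinfty_le _ _ _ 0) => x x0.
set g := fun t => _; have gE t : (x <= t)%R -> g t = (expmean t)%:E.
  by move=> xt; apply: R_upper_integrandE; exact: le_trans xt.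
have g_fin : sup_from g x \is a fin_num.
  apply: (@sup_from_fin_num _ _ _ (- M) M) => t xt.
  by rewrite gE // !lee_fin -ler_norml normr_expmean_le // (le_trans x0).
rewrite -(fineK g_fin) -EFinD window_meanE // lee_fin ler_pdivrMr // mulrDl.
rewrite divfK ?gt_eqF // mulrC.
apply: primB_le_sup_expmean (ltW th0) _ => // t xt.
by rewrite -lee_fin -gE // fineK // sup_from_ub.
Qed.

Lemma limsup_window_mean_le s th : (0 < s)%R -> (0 < th)%R ->
  limsup_pinfty (window_mean f th) <=
  limsup_pinfty (window_mean f s) + (2 * M * s / th)%:E.
Proof.
move=> s0 th0; apply: (@limsup_pinfty_le _ _ _ 0) => x x0.
have w_fin : sup_from (window_mean f s) x \is a fin_num.
  apply: (@sup_from_fin_num _ _ _ (- M) M) => t xt.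
  by apply: window_mean_bounded s0; exact: le_trans xt.
set sg := fine (sup_from (window_mean f s) x).
have sgE : sup_from (window_mean f s) x = sg%:E by rewrite fineK.
have M_sg : (- M <= sg)%R.
  rewrite -lee_fin -sgE; apply: le_trans (sup_from_ub _ (lexx x)).
  by case/andP: (window_mean_bounded x0 s0).
have step y : (x <= y)%R -> (prim (y + s) - prim y <= s * sg)%R.
  move=> xy; have := sup_from_ub (window_mean f s) xy.
  by rewrite sgE window_meanE ?(le_trans x0) // lee_fin ler_pdivrMr // mulrC.
have lip a b : (x <= a)%R -> (a <= b)%R -> (prim b - prim a <= M * (b - a))%R.
  move=> xa ab; apply: le_trans (ler_norm _) _.
  exact: normr_primB_le (le_trans x0 xa) ab.
rewrite sgE -EFinD window_meanE // lee_fin ler_pdivrMr // mulrDl.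
rewrite divfK ?gt_eqF // mulrC.
exact: increment_le_of_step M0 s0 (ltW th0) M_sg lip step.
Qed.

Let limsup_window_mean_fin_num th : (0 < th)%R ->
  limsup_pinfty (window_mean f th) \is a fin_num.
Proof.
move=> th0; have /andP[lo hi] := limsup_window_mean_bounded th0.
by rewrite fin_numElt (lt_le_trans (ltNyr _) lo) (le_lt_trans hi (ltry _)).
Qed.

Let fine_limsup_window_mean_ge th : (0 < th)%R ->
  (- M <= fine (limsup_pinfty (window_mean f th)))%R.
Proof.
move=> th0; have /andP[lo _] := limsup_window_mean_bounded th0.
by rewrite -lee_fin fineK ?limsup_window_mean_fin_num.
Qed.

(* [M1_upper] is a [lim], which means nothing until convergence is proved. *)
Lemma M1_upperE : M1_upper f =
  (inf [set fine (limsup_pinfty (window_mean f s)) | s in `]0%R, +oo[])%:E.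
Proof.
pose h th := fine (limsup_pinfty (window_mean f th)).
have h_le s th : (0 < s)%R -> (0 < th)%R -> (h th <= h s + 2 * M * s / th)%R.
  move=> s0 th0; have := limsup_window_mean_le s0 th0.
  rewrite -(fineK (limsup_window_mean_fin_num th0)).
  by rewrite -(fineK (limsup_window_mean_fin_num s0)) -EFinD lee_fin.
have h_cvg := cvgy_inf fine_limsup_window_mean_ge h_le.
rewrite /M1_upper; apply: cvg_lim => //; apply: cvg_EFin h_cvg.
near=> th; apply: limsup_window_mean_fin_num.
by near: th; exact: nbhs_pinfty_gt.
Unshelve. all: by end_near.
Qed.

Lemma M1_upper_le_limsup_window_mean th : (0 < th)%R ->
  M1_upper f <= limsup_pinfty (window_mean f th).
Proof.
move=> th0; rewrite M1_upperE -[leRHS](fineK (limsup_window_mean_fin_num th0)).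
rewrite lee_fin.
apply: ge_inf; last by exists th => //=; rewrite in_itv /= th0.
exists (- M)%R => _ [s /= s0 <-]; rewrite in_itv /= andbT in s0.
exact: fine_limsup_window_mean_ge.
Qed.

Lemma M1_upper_le_R_upper : M1_upper f <= R_upper f.
Proof.
apply/lee_addgt0Pr => e e0; pose th := (2 * M / e + 1)%R.
have th0 : (0 < th)%R by rewrite ltr_wpDl // divr_ge0 ?mulr_ge0 // ltW.
apply: le_trans (M1_upper_le_limsup_window_mean th0) _.
apply: le_trans (limsup_window_mean_le_R_upper th0) _.
apply: leeD => //; rewrite lee_fin ler_pdivrMr // /th mulrDr mulr1 mulrCA.
by rewrite mulfV ?gt_eqF // mulr1 lerDl ltW.
Qed.
End bounded_function.

Local Open Scope ereal_scope.

Theorem theorem3p5 (R : realType) (f : R -> R) :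
  Linfty_Rplus f -> M1_upper f <= R_upper f.
Proof.
move=> [mf [M fM]]; apply: (@M1_upper_le_R_upper _ _ (Num.max M 0)%R) => //.
  by rewrite le_max lexx orbT.
by apply: lebesgue_aeS fM => t fMt /fMt /le_trans; apply; rewrite le_max lexx.
Qed.
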